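(* Consider a black-white array (BWA) storing at most $n=2^m$ values. Suppose the values are uniformly distributed, so that the probability that the searched value lies in a given active segment is proportional to that segment's length. Then the amortized (expected) time of a search for a value that is present in the BWA is $O(\log n)$.
   Context: A black-white array (BWA) of size $N=2^K$ stores values from a totally ordered set. Its white array is $W[1..N-1]$. For $i\ge0$, the segment of rank $i$ is the index block $[2^i,2^{i+1}-1]$, of length $2^i$. A state variable $\mathtt{total}$ counts stored values. The rank-$i$ segment is active iff bit $i$ of $\mathtt{total}$ is $1$. Between operations, all stored values lie in the active white segments, each sorted ascending. Search$(v)$: for $i=K-1$ down to $0$, if the rank-$i$ segment is active, binary-search the white rank-$i$ segment for $v$. A binary search of a segment of length $L$ costs $O(\log L+1)$. Return the index at the first success, or Nil if none. *)

From mathcomp Require Import all_boot all_order all_algebra.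
Set Implicit Arguments. Unset Strict Implicit. Unset Printing Implicit Defensive.
Import Order.TTheory GRing.Theory Num.Theory.

(* The rank-i segment is active iff bit i of total is 1. *)
Definition active (total i : nat) : bool := odd (total %/ 2 ^ i).

Definition segment (i : nat) : seq nat := map (addn (2 ^ i)) (iota 0 (2 ^ i)).

(* Cost of Search(v) on the white array W of a BWA with state total,
   scanning ranks k-1 down to 0; bs L is the cost of a binary search of a
   segment of length L. *)
Fixpoint search_cost {d} {T : orderType d} (bs : nat -> nat) (total : nat)
  (W : nat -> T) (v : T) (k : nat) : nat :=
  match k with
  | 0 => 0
  | i.+1 =>
      if active total i then
        bs (2 ^ i) + (if has (fun p => W p == v) (segment i) then 0
                      else search_cost bs total W v i)
      else search_cost bs total W v i
  end.

(* Expected cost of searching a stored value, each stored value (position in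
   an active white segment) being equally likely: segment i is hit with
   probability 2^i / total. *)
Definition expected_search_cost {d} {T : orderType d} (bs : nat -> nat)
  (K total : nat) (W : nat -> T) : rat :=
  (\sum_(i < K | active total i)
     \sum_(p <- segment i) (search_cost bs total W (W p) K)%:R / total%:R)%R.

From mathcomp Require Import all_boot all_order all_algebra.
Import Order.TTheory GRing.Theory Num.Theory.

(* A value stored in the active segment of rank i is found after scanning
   only active segments of rank j >= i, each at cost bs (2 ^ j) <= c (m + 1)
   because an active rank has 2 ^ j <= total <= 2 ^ m.  Summing over the 2 ^ i
   values of each rank and exchanging the sums, the cost of rank j is paid at
   most sum_(i <= j) 2 ^ i < 2 ^ (j + 1) times, and the 2 ^ j of the active
   ranks add up to at most total; hence the total cost of all searches is at
   most 2 c (m + 1) total. *)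

Set Implicit Arguments.
Unset Strict Implicit.
Unset Printing Implicit Defensive.

Lemma active_exp_le total j : active total j -> 2 ^ j <= total.
Proof.
by rewrite /active -divn_gt0 ?expn_gt0 //; case: (total %/ 2 ^ j).
Qed.

Lemma sum_active_exp_le K total : \sum_(j < K | active total j) 2 ^ j <= total.
Proof.
elim: K total => [|K IH] n; first by rewrite big_ord0.
rewrite big_mkcond big_ord_recl /= -big_mkcond /=.
have -> : \sum_(i < K | active n (bump 0 i)) 2 ^ bump 0 i
          = 2 * \sum_(i < K | active n./2 i) 2 ^ i.
  rewrite big_distrr /=; apply: eq_big => i.
    by rewrite /active /bump /= add1n expnS divnMA divn2.
  by rewrite /bump add1n expnS.
rewrite /active expn0 divn1 {3}(divn_eq n 2) modn2 addnC -divn2 mulnC.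
by rewrite leq_add ?leq_mul2r ?IH ?orbT //; case: odd.
Qed.

Lemma sum_exp2_lt n : \sum_(i < n) 2 ^ i < 2 ^ n.
Proof. by rewrite -[X in X < _]mul1n -[1]/(2.-1) -predn_exp ltn_predL expn_gt0. Qed.

Lemma sum_weighted_suffix_le (a : pred nat) (f : nat -> nat) K :
  \sum_(i < K | a i) 2 ^ i * \sum_(j < K | a j && (i <= j)) f j
    <= \sum_(j < K | a j) 2 ^ j.+1 * f j.
Proof.
under eq_bigr => i _ do rewrite big_distrr.
rewrite (exchange_big_dep (fun j : 'I_K => a j)) /=; last by move=> i j _ /andP[].
apply: leq_sum => j a_j; rewrite -big_distrl leq_mul2r /=; apply/orP; right.
apply: leq_trans (ltnW (sum_exp2_lt j.+1)).
rewrite (big_ord_widen _ (fun i => 2 ^ i) (ltn_ord j)).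
by apply: (sub_le_big leqnn (fun m n => leq_addr n m)) => i /and3P[].
Qed.

Section SearchCost.

Variables (d : Order.disp_t) (T : orderType d).
Variables (bs : nat -> nat) (total : nat) (W : nat -> T).

Lemma search_cost_le i p K : i < K -> active total i -> p \in segment i ->
  search_cost bs total W (W p) K
    <= \sum_(j < K | active total j && (i <= j)) bs (2 ^ j).
Proof.
move=> + act_i p_i; elim: K => [//|K IH] lt_iK /=.
rewrite big_mkcond big_ord_recr /= -big_mkcond /=.
case: (ltngtP i K) => [lt_iK' | | <-]; last 2 first.
- by rewrite ltnNge -ltnS lt_iK.
- rewrite act_i (introT hasP) ?addn0 ?leq_addl //.
  by exists p.
case: ifP => act_K; last by rewrite addn0 IH.
by rewrite addnC leq_add2r; case: has; rewrite ?IH.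
Qed.

Lemma sum_segment_search_cost_le i K :
    i < K -> active total i ->
  \sum_(p <- segment i) search_cost bs total W (W p) K
    <= 2 ^ i * \sum_(j < K | active total j && (i <= j)) bs (2 ^ j).
Proof.
move=> lt_iK act_i.
have -> : 2 ^ i = size (segment i) by rewrite size_map size_iota.
rewrite -sum1_size big_distrl big_seq [X in _ <= X]big_seq /=.
by apply: leq_sum => p p_i; rewrite mul1n search_cost_le.
Qed.

End SearchCost.

Lemma bs_active_le c bs total m j :
    (forall L, 0 < L -> bs L <= c * (trunc_log 2 L).+1) ->
    total <= 2 ^ m -> active total j ->
  bs (2 ^ j) <= c * m.+1.
Proof.
move=> bs_log total_le act_j; apply: leq_trans (bs_log _ (expn_gt0 2 j)) _.
rewrite trunc_expnK // leq_mul2l ltnS -(@leq_exp2l 2) //.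
by rewrite (leq_trans (active_exp_le act_j)) ?orbT.
Qed.

Theorem mainTheorem9 :
  forall (c : nat) (bs : nat -> nat),
    (forall L : nat, 0 < L -> bs L <= c * (trunc_log 2 L).+1) ->
  exists C : nat,
    forall (d : Order.disp_t) (T : orderType d) (m K total : nat) (W : nat -> T),
      0 < total ->
      total <= 2 ^ m ->
      total < 2 ^ K ->
      (forall i, i < K -> active total i -> sorted <=%O [seq W p | p <- segment i]) ->
      (expected_search_cost bs K total W <= (C * m.+1)%:R)%R.
Proof.
move=> c bs bs_log; exists (2 * c) => d T m K total W total_gt0 total_le _ _.
have cost_le : \sum_(i < K | active total i) \sum_(p <- segment i)
                 search_cost bs total W (W p) K <= total * (2 * c * m.+1).
  apply: leq_trans (leq_trans _ (sum_weighted_suffix_le _ (fun j => bs (2 ^ j)) K)) _.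
    by apply: leq_sum => i act_i; apply: sum_segment_search_cost_le.
  apply: (@leq_trans ((\sum_(j < K | active total j) 2 ^ j) * (2 * c * m.+1))).
    rewrite big_distrl; apply: leq_sum => j act_j.
    rewrite expnS -!mulnA mulnCA !leq_pmul2l ?expn_gt0 //.
    exact: bs_active_le bs_log total_le act_j.
  by rewrite leq_mul2r sum_active_exp_le orbT.
rewrite /expected_search_cost.
under eq_bigr => i _ do rewrite -mulr_suml -natr_sum.
by rewrite -mulr_suml -natr_sum ler_pdivrMr ?ltr0n // -natrM ler_nat mulnC.
Qed.
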